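(* Let $p>2$ be a prime and $g$ a generator of $U(\mathbb Z/p\mathbb Z)$. Let $\beta_1\in\mathbb R$ and $\beta_2>0$, let $\varphi=\cos\frac{2\pi}{p-1}+i\sin\frac{2\pi}{p-1}$ and $\tau=\cos\frac{2\pi}{p}+i\sin\frac{2\pi}{p}$, and consider the lists $$\Sigma=(\beta_1,\beta_2,\beta_2\varphi,\beta_2\varphi^2,\dots,\beta_2\varphi^{p-2}),\qquad \Sigma'=(\beta_1,\beta_2\tau,\beta_2\tau^2,\dots,\beta_2\tau^{p-1}).$$ If $C=circ(c_1,\dots,c_p)$ is the real circulant matrix whose eigenvalues $\lambda_k=\sum_{\ell=1}^p c_\ell\tau^{(k-1)(\ell-1)}$, $1\le k\le p$, are the components of $\Sigma'$ in this order, then $A=Q_gC$ is a real $g$-circulant matrix whose eigenvalues can be ordered as the components of $\Sigma$.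
   Context: $circ(c_1,\dots,c_p)$ is the circulant matrix with $(i,j)$ entry $c_{j-i+1}$ (subscripts mod $p$ in $\{1,\dots,p\}$). $Q_g$ is the $p\times p$ permutation matrix whose $(i,j)$ entry is $1$ if $j\equiv 1+(i-1)g\pmod p$ and $0$ otherwise. A $g$-circulant matrix is one in which each row is the preceding row cyclically shifted $g$ places to the right. *)

From HB Require Import structures.
From mathcomp Require Import all_boot all_order all_algebra.
From mathcomp Require Import complex.
From mathcomp Require Import reals trigo.
Set Implicit Arguments. Unset Strict Implicit. Unset Printing Implicit Defensive.
Import Order.TTheory GRing.Theory Num.Theory.
Local Open Scope ring_scope.
Local Open Scope complex_scope.

Definition is_generator_mod (p g : nat) : Prop :=
  coprime g p /\ forall u : nat, coprime u p -> exists k : nat, g ^ k = u %[mod p].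

(* circ(c_1,...,c_p), with 0-based indices: c_l is  c (l-1); entry (i,j) = c_{(j-i) mod p} *)
Definition circ (R : Type) (p : nat) (c : nat -> R) : 'M[R]_p :=
  \matrix_(i < p, j < p) c ((j + p - i) %% p)%N.

Definition Qmat (R : nzRingType) (p g : nat) : 'M[R]_p :=
  \matrix_(i < p, j < p) (if (nat_of_ord j == (i * g) %% p)%N then 1 else 0).

Definition g_circulant (R : Type) (p g : nat) (A : 'M[R]_p) : Prop :=
  forall i i' j j' : 'I_p, i' = i.+1 :> nat -> j' = ((j + g) %% p)%N :> nat ->
    A i' j' = A i j.

Definition unit_root (R : realType) (n : nat) : R[i] :=
  (cos (2 * pi / n%:R)) +i* (sin (2 * pi / n%:R)).

Definition Sigma (R : realType) (p : nat) (b1 b2 : R) (k : nat) : R[i] :=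
  if k == 0%N then b1%:C else b2%:C * (unit_root R p.-1) ^+ k.-1.

Definition Sigma' (R : realType) (p : nat) (b1 b2 : R) (k : nat) : R[i] :=
  if k == 0%N then b1%:C else b2%:C * (unit_root R p) ^+ k.

From HB Require Import structures.
From mathcomp Require Import all_boot all_order all_algebra.
From mathcomp Require Import complex.
From mathcomp Require Import reals trigo.
From mathcomp Require cyclic.
From mathcomp Require Import lra zify.
Set Implicit Arguments. Unset Strict Implicit. Unset Printing Implicit Defensive.
Import Order.TTheory GRing.Theory Num.Theory.
Local Open Scope ring_scope.
Local Open Scope complex_scope.

(* Let v_k = (tau^(jk))_j be the Fourier vectors and lambda_k the eigenvalues of C.
   Then C v_k = lambda_k v_k and Q_g v_k = v_(kg), so A v_k = lambda_k v_(kg): A fixes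
   v_0 with eigenvalue beta_1 and, g generating U(Z/pZ), permutes the lines of
   v_1, v_g, ..., v_(g^(p-2)) cyclically.  Rescaling these vectors by the eigenvalues
   beta_2 tau^(g^s) accumulated along the orbit, A maps each one to the next and the
   last one to beta_2^(p-1) tau^(1 + g + ... + g^(p-2)) v_1 = beta_2^(p-1) v_1, since
   p divides 1 + g + ... + g^(p-2).  Together with v_0 they form a basis (the v_k are
   the columns of a Vandermonde matrix at distinct nodes), so the characteristic
   polynomial of A is (X - beta_1)(X^(p-1) - beta_2^(p-1)), whose roots are Sigma. *)

Section GeneratorModPrime.
Local Open Scope nat_scope.
Variables p g : nat.
Hypotheses (p_pr : prime p) (g_gen : is_generator_mod p g).

Lemma expg_pred_mod : g ^ p.-1 = 1 %[mod p].
Proof. by rewrite -(totient_prime p_pr) cyclic.Euler_exp_totient // g_gen.1. Qed.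

Lemma expg_mod_pred k : g ^ (k %% p.-1) = g ^ k %[mod p].
Proof.
rewrite {2}(divn_eq k p.-1) expnD [_ * p.-1]mulnC expnM -modnMml.
by rewrite -[_ ^ (k %/ _) %% p]modnXm expg_pred_mod modnXm exp1n modnMml mul1n.
Qed.

Lemma ndvd_expg s : ~~ (p %| g ^ s).
Proof. by rewrite -prime_coprime // coprimeXr // coprime_sym g_gen.1. Qed.

(* s |-> g^s mod p maps [0, p-1) onto the p-1 nonzero residues, hence injectively. *)
Lemma expg_mod_inj s s' : s < p.-1 -> s' < p.-1 -> g ^ s = g ^ s' %[mod p] -> s = s'.
Proof.
have p_gt1 := prime_gt1 p_pr; have p_gt0 := ltnW p_gt1.
pose f (t : 'I_p.-1) : 'I_p := Ordinal (ltn_pmod (g ^ t) p_gt0).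
pose zero : 'I_p := Ordinal p_gt0.
have f_onto (u : 'I_p) : u != zero -> u \in codom f.
  move=> u_neq0; have u_gt0 : 0 < u.
    by rewrite lt0n; apply: contraNneq u_neq0 => u0; apply/eqP/val_inj.
  have [k gk_u] : exists k, g ^ k = u %[mod p].
    apply: g_gen.2; rewrite coprime_sym prime_coprime //.
    by apply: contraTN u_gt0 => /dvdn_leq; have := ltn_ord u; lia.
  have pred_p_gt0 : 0 < p.-1 by lia.
  apply/codomP; exists (Ordinal (ltn_pmod k pred_p_gt0)); apply: val_inj.
  by rewrite /= expg_mod_pred gk_u modn_small.
have /image_injP f_inj : #|codom f| == #|'I_p.-1|.
  rewrite eqn_leq leq_image_card /=.
  have -> : #|'I_p.-1| = #|predC1 zero| by rewrite cardC1 !card_ord.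
  by apply/subset_leq_card/subsetP => u; apply: f_onto.
move=> s_lt s'_lt gs_gs'.
suff /(congr1 val) : Ordinal s_lt = Ordinal s'_lt by [].
by apply: f_inj => //; apply: val_inj.
Qed.

(* (g - 1)(1 + g + ... + g^(p-2)) = g^(p-1) - 1 = 0 (mod p), while g <> 1 (mod p)
   because some power of g is 2. *)
Lemma dvdn_sum_expg : 2 < p -> p %| \sum_(s < p.-1) g ^ s.
Proof.
move=> p_gt2; have g_gt0 : 0 < g.
  by case: posnP g_gen => // -> []; rewrite /coprime gcd0n => /eqP p1; rewrite p1 in p_gt2.
have : p %| g.-1 * \sum_(s < p.-1) g ^ s.
  rewrite -predn_exp -subn1 -eqn_mod_dvd ?expn_gt0 ?g_gt0 //; exact/eqP/expg_pred_mod.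
rewrite Euclid_dvdM // => /orP[p_dvd_g1|//]; exfalso.
have g_1 : g = 1 %[mod p] by apply/eqP; rewrite eqn_mod_dvd // subn1.
have [k] : exists k, g ^ k = 2 %[mod p].
  apply: g_gen.2; rewrite coprime_sym prime_coprime //.
  by apply: contraTN p_gt2 => /dvdn_leq; lia.
by rewrite -modnXm g_1 modnXm exp1n !modn_small //; lia.
Qed.

End GeneratorModPrime.

Section UnitRoot.
Variable R : realType.

Lemma cos_lt1 (x : R) : 0 < x < pi *+ 2 -> cos x < 1.
Proof.
wlog x_le_pi : x / x <= pi.
  move=> wlog_x /andP[x_gt0 x_lt2pi]; have [|pi_lt_x] := leP x pi.
    by move=> x_le_pi; apply: wlog_x; rewrite // x_gt0.
  rewrite -cosN -cosD2pi; apply: wlog_x; rewrite -?mulr2n; lra.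
move=> /andP[x_gt0 _]; rewrite -cos0 ltr_cos // in_itv /= ?lexx ?pi_ge0 //.
by rewrite ltW.
Qed.

Lemma unit_root_exp n k : unit_root R n ^+ k =
  cos (k%:R * (2 * pi / n%:R)) +i* sin (k%:R * (2 * pi / n%:R)).
Proof.
elim: k => [|k IHk]; first by rewrite expr0 !mul0r cos0 sin0.
rewrite exprSr IHk /unit_root; set x := 2 * pi / n%:R.
rewrite [_ * (_ +i* _)]/GRing.mul /= mulrSr mulrDl mul1r cosD sinD.
by congr (_ +i* _); rewrite addrC.
Qed.

Lemma unit_root_prim n : (0 < n)%N -> n.-primitive_root (unit_root R n).
Proof.
move=> n_gt0; apply/andP; split=> //; apply/forallP => i.
rewrite unity_rootE unit_root_exp.
have n_neq0 : n%:R != 0 :> R by rewrite pnatr_eq0 -lt0n.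
have [->|i1_neq_n] := eqVneq i.+1 n.
  by rewrite mulrCA divff // mulr1 mulr_natl cos2pi sin2pi eqxx.
have i1_lt_n : (i.+1 < n)%N by rewrite ltn_neqAle i1_neq_n ltn_ord.
have cos_lt : cos (i.+1%:R * (2 * pi / n%:R) : R) < 1.
  apply: cos_lt1; rewrite mulr_gt0 ?divr_gt0 ?mulr_gt0 ?pi_gt0 ?ltr0n //=.
  rewrite mulrA ltr_pdivrMr ?ltr0n //; have := @pi_gt0 R.
  have : i.+1%:R < n%:R :> R by rewrite ltr_nat.
  nra.
rewrite eqbF_neg eq_complex /=; apply: contraTN cos_lt => /andP[/eqP -> _].
by rewrite ltxx.
Qed.

End UnitRoot.

Lemma real_complex_eq0 (R : pzRingType) (x : R) : (x%:C == 0) = (x == 0).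
Proof. by rewrite eq_complex /= eqxx andbT. Qed.

(* [(a + n - b %% n) %% n] is the residue of a - b, as used in [circ], written so
   that the truncated subtraction never truncates. *)
Section CircIndex.
Local Open Scope nat_scope.
Variable n : nat.

Lemma circ_indexK a b : 0 < n -> (a + n - b %% n) %% n + b = a %[mod n].
Proof.
move=> n_gt0; rewrite modnDml -modnDmr subnK ?modnDr //.
exact: leq_trans (ltnW (ltn_pmod b n_gt0)) (leq_addl _ _).
Qed.

Lemma circ_index_uniq a b l : l < n -> l + b = a %[mod n] -> (a + n - b %% n) %% n = l.
Proof.
move=> l_lt_n lb_a; have n_gt0 : 0 < n by apply: leq_ltn_trans l_lt_n.
rewrite -(modn_small l_lt_n); apply/eqP.
by rewrite -(eqn_modDr b) -modnDml circ_indexK // lb_a.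
Qed.

End CircIndex.

Lemma Qmat_mulmxE (R : nzRingType) n g m (M : 'M[R]_(n, m)) (i k : 'I_n) j :
  k = ((i * g) %% n)%N :> nat -> (Qmat R n g *m M) i j = M k j.
Proof.
move=> k_ig; rewrite mxE (bigD1 k) //= big1 ?addr0 => [|l l_neq_k].
  by rewrite mxE k_ig eqxx mul1r.
by rewrite mxE ifN ?mul0r // -k_ig.
Qed.

Lemma Qmat_circE (R : nzRingType) n g (c : nat -> R) (i j : 'I_n) :
  (Qmat R n g *m circ n c) i j = c ((j + n - (i * g) %% n) %% n)%N.
Proof.
have n_gt0 : (0 < n)%N by apply: leq_ltn_trans (ltn_ord i).
by rewrite (Qmat_mulmxE _ (k := Ordinal (ltn_pmod (i * g) n_gt0))) // mxE.
Qed.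

Lemma g_circulant_Qmat_circ (R : nzRingType) n g (c : nat -> R) :
  g_circulant g (Qmat R n g *m circ n c).
Proof.
move=> i i' j j' i'_i j'_j; rewrite !Qmat_circE; congr c.
have n_gt0 : (0 < n)%N by apply: leq_ltn_trans (ltn_ord i).
apply: circ_index_uniq; first exact: ltn_pmod.
rewrite i'_i mulSn addnCA -modnDmr circ_indexK // j'_j.
by rewrite modnDmr modn_mod addnC.
Qed.

Lemma map_circ (R S : Type) (f : R -> S) n (c : nat -> R) :
  map_mx f (circ n c) = circ n (f \o c).
Proof. by apply/matrixP => i j; rewrite !mxE. Qed.

Lemma map_Qmat (R S : nzRingType) (f : {rmorphism R -> S}) n g :
  map_mx f (Qmat R n g) = Qmat S n g.
Proof. by apply/matrixP => i j; rewrite !mxE; case: ifP; rewrite ?rmorph1 ?rmorph0. Qed.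

Section FourierVectors.
Variables (R : comNzRingType) (n : nat) (z : R).
Hypothesis zn1 : z ^+ n = 1.

Definition fourier_vec k : 'cV[R]_n := \col_j z ^+ (j * k).

Definition circ_eigenvalue (c : nat -> R) k := \sum_(l < n) c l * z ^+ (k * l).

Lemma expr_modn a b : a = b %[mod n] -> z ^+ a = z ^+ b.
Proof. by move=> ab; rewrite -(expr_mod _ zn1) ab expr_mod. Qed.

Lemma circ_mul_fourier c k :
  circ n c *m fourier_vec k = circ_eigenvalue c k *: fourier_vec k.
Proof.
apply/colP => i; rewrite !mxE.
have n_gt0 : (0 < n)%N by apply: leq_ltn_trans (ltn_ord i).
pose shift (l : 'I_n) : 'I_n := Ordinal (ltn_pmod (l + i) n_gt0).
have shift_inj : injective shift.
  move=> l l' /(congr1 val) /= /eqP; rewrite eqn_modDr !modn_small // => /eqP.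
  exact: val_inj.
rewrite (reindex_inj shift_inj) /circ_eigenvalue mulr_suml; apply: eq_bigr => l _.
rewrite !mxE /= -[X in (_ - X)%N](modn_small (ltn_ord i)).
rewrite (@circ_index_uniq _ _ _ l) ?modn_mod //.
rewrite -mulrA -exprD; congr (_ * _).
by apply: expr_modn; rewrite modnMml mulnDl [(l * k)%N]mulnC.
Qed.

Lemma Qmat_mul_fourier g k : Qmat R n g *m fourier_vec k = fourier_vec (k * g).
Proof.
apply/colP => i; have n_gt0 : (0 < n)%N by apply: leq_ltn_trans (ltn_ord i).
rewrite (Qmat_mulmxE _ (k := Ordinal (ltn_pmod (i * g) n_gt0))) // !mxE.
by apply: expr_modn; rewrite /= modnMml mulnAC mulnA.
Qed.

End FourierVectors.

Lemma fourier_basis_unitmx (F : fieldType) n (z : F) (e : 'I_n -> nat) (s : 'I_n -> F) :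
  n.-primitive_root z -> (forall i j, e i = e j %[mod n] -> i = j) ->
  (forall t, s t != 0) -> \matrix_(r, t) (s t * z ^+ (r * e t)) \in unitmx.
Proof.
move=> z_prim e_inj s_neq0.
have -> : \matrix_(r, t) (s t * z ^+ (r * e t)) =
          Vandermonde n (\row_t z ^+ e t) *m diag_mx (\row_t s t).
  by apply/matrixP => r t; rewrite mul_mx_diag !mxE mulrC -exprM mulnC.
rewrite unitmxE unitfE det_mulmx det_Vandermonde det_diag mulf_neq0 //.
  apply/prodf_neq0 => i _; apply/prodf_neq0 => j i_lt_j.
  rewrite !mxE subr_eq0 (eq_prim_root_expr z_prim).
  by apply: contraTneq i_lt_j => /e_inj ->; rewrite ltnn.
by apply/prodf_neq0 => t _; rewrite mxE.
Qed.

Section CharPoly.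
Variable F : fieldType.

Lemma char_poly_similar n (A B W : 'M[F]_n) :
  W \in unitmx -> A *m W = W *m B -> char_poly A = char_poly B.
Proof.
move=> W_unit AW_WB; pose WX := map_mx polyC W.
have detWX_neq0 : \det WX != 0.
  by rewrite det_map_mx polyC_eq0 -unitfE -unitmxE.
apply: (mulIf detWX_neq0); rewrite [RHS]mulrC -!det_mulmx; congr (\det _).
rewrite /char_poly_mx mulmxBl mulmxBr -!map_mxM AW_WB.
by rewrite mul_mx_scalar mul_scalar_mx.
Qed.

Lemma char_poly_castmx m n (e : m = n) (M : 'M[F]_m) :
  char_poly (castmx (e, e) M) = char_poly M.
Proof. by case: n / e; rewrite castmx_id. Qed.

Lemma char_poly_tr n (M : 'M[F]_n) : char_poly M^T = char_poly M.
Proof.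
by rewrite /char_poly -det_tr /char_poly_mx linearB /= tr_scalar_mx map_trmx trmxK.
Qed.

Definition cyclic_shift_mx d (a : F) : 'M[F]_d.+1 :=
  \matrix_(i, j) if j == d :> nat then (i == 0 :> nat)%:R * a else (i == j.+1 :> nat)%:R.

Lemma char_poly_cyclic_shift_mx d a : char_poly (cyclic_shift_mx d a) = 'X^(d.+1) - a%:P.
Proof.
set q := 'X^(d.+1) - a%:P; have size_q : size q = d.+2 by rewrite size_XnsubC.
have eq_d : (size q).-1 = d.+1 by rewrite size_q.
suff -> : cyclic_shift_mx d a = castmx (eq_d, eq_d) (companionmx q)^T.
  by rewrite char_poly_castmx char_poly_tr companionmxK ?monicXnsubC.
apply/matrixP => i j; rewrite castmxE !mxE /= size_q /= coefB coefXn coefC.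
rewrite (ltn_eqF (ltn_ord i)) sub0r; case: eqP => _; last by rewrite eq_sym.
by case: (i == 0 :> nat); rewrite ?mul1r ?mul0r ?opprK ?oppr0.
Qed.

(* The matrix of v |-> b v, w_j |-> w_(j+1) (j < d), w_d |-> a w_0 in the basis
   (v, w_0, ..., w_d). *)
Definition fix_cycle_mx d (b a : F) : 'M[F]_d.+2 := \matrix_(i, j)
  if j == 0 :> nat then (i == 0 :> nat)%:R * b
  else if j == d.+1 :> nat then (i == 1 :> nat)%:R * a
  else (i == j.+1 :> nat)%:R.

Lemma char_poly_fix_cycle_mx d b a :
  char_poly (fix_cycle_mx d b a) = ('X - b%:P) * ('X^(d.+1) - a%:P).
Proof.
rewrite /char_poly (expand_det_col _ ord0) (bigD1 ord0) //= big1 ?addr0; last first.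
  move=> i i_neq0; have i_neq0' : (i == 0 :> nat) = false := negbTE i_neq0.
  by rewrite !mxE /= (negbTE i_neq0) i_neq0' mul0r raddf0 subr0 mul0r.
rewrite /cofactor row'_col'_char_poly_mx.
have -> : row' ord0 (col' ord0 (fix_cycle_mx d b a)) = cyclic_shift_mx d a.
  by apply/matrixP => i j; rewrite !mxE /= /bump /= !add1n !eqSS.
by rewrite -/(char_poly _) char_poly_cyclic_shift_mx !mxE /= mul1r expr0 mul1r mulr1n.
Qed.

Section OrbitBasis.
Variables (d : nat) (v : 'cV[F]_d.+2) (w : nat -> 'cV[F]_d.+2).

Definition orbit_basis : 'M[F]_d.+2 :=
  \matrix_(r, t) if t == 0 :> nat then v r 0 else w t.-1 r 0.

Lemma col_orbit_basis t : col t orbit_basis = if t == 0 :> nat then v else w t.-1.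
Proof. by apply/colP => r; rewrite !mxE; case: ifP. Qed.

Variables (A : 'M[F]_d.+2) (b a : F).
Hypotheses (Av : A *m v = b *: v) (Aw : forall j, A *m w j = w j.+1)
  (w_wrap : w d.+1 = a *: w 0).

Lemma mulmx_orbit_basis : A *m orbit_basis = orbit_basis *m fix_cycle_mx d b a.
Proof.
suff col_eq t : col t (A *m orbit_basis) = col t (orbit_basis *m fix_cycle_mx d b a).
  by apply/matrixP => r t; have /colP/(_ r) := col_eq t; rewrite !mxE.
have col_mulN (i : 'I_d.+2) x :
    (forall j, fix_cycle_mx d b a j t = (j == i :> nat)%:R * x) ->
    col t (orbit_basis *m fix_cycle_mx d b a) = x *: col i orbit_basis.
  move=> N_t; rewrite colE -mulmxA -colE (colE i) scalemxAr; congr (_ *m _).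
  by apply/colP => j; rewrite mxE N_t !mxE mulrC andbT.
rewrite colE -mulmxA -colE col_orbit_basis.
have [t0 | t_neq0] := eqVneq (t : nat) 0%N.
  by rewrite Av (col_mulN ord0 b) ?col_orbit_basis // => j; rewrite mxE t0.
have [td | t_neq_d] := eqVneq (t : nat) d.+1.
  rewrite (col_mulN (Ordinal (isT : 1 < d.+2)%N) a); last by move=> j; rewrite mxE td eqxx.
  by rewrite col_orbit_basis /= Aw td w_wrap.
have t1_lt : (t.+1 < d.+2)%N by move: (ltn_ord t) t_neq_d; lia.
rewrite (col_mulN (Ordinal t1_lt) 1); last first.
  by move=> j; rewrite mxE (negbTE t_neq0) (negbTE t_neq_d) mulr1.
by rewrite col_orbit_basis /= scale1r Aw prednK // lt0n.
Qed.

Lemma char_poly_orbit_basis :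
  orbit_basis \in unitmx -> char_poly A = ('X - b%:P) * ('X^(d.+1) - a%:P).
Proof.
move=> W_unit; rewrite -char_poly_fix_cycle_mx.
exact: char_poly_similar W_unit mulmx_orbit_basis.
Qed.

End OrbitBasis.

Lemma prod_XsubC_scaled_prim_root n (z a : F) :
  n.-primitive_root z -> a != 0 ->
  \prod_(k < n) ('X - (a * z ^+ k)%:P) = 'X^n - (a ^+ n)%:P.
Proof.
move=> z_prim a_neq0; have n_gt0 := prim_order_gt0 z_prim.
set rs := [seq a * z ^+ k | k <- index_iota 0 n].
have -> : \prod_(k < n) ('X - (a * z ^+ k)%:P) = \prod_(r <- rs) ('X - r%:P).
  by rewrite big_map -(big_mkord xpredT (fun k => 'X - (a * z ^+ k)%:P)).
rewrite [RHS](@all_roots_prod_XsubC _ _ rs).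
- by rewrite lead_coefXnsubC // scale1r.
- by rewrite size_XnsubC // size_map size_iota subn0.
- apply/allP => _ /mapP[k _ ->]; rewrite rootE !hornerE.
  by rewrite exprMn exprAC (prim_expr_order z_prim) expr1n mulr1 subrr.
rewrite uniq_rootsE map_inj_in_uniq ?iota_uniq // => i j.
rewrite !mem_index_iota => /= i_lt_n j_lt_n /(mulfI a_neq0)/eqP.
by rewrite (eq_prim_root_expr z_prim) !modn_small // => /eqP.
Qed.

End CharPoly.

Section GCirculantSpectrum.
Variables (R : realType) (m g : nat) (b1 b2 : R) (c : nat -> R).
Local Notation p := m.+2.
Local Notation tau := (unit_root R p).
Local Notation v := (fourier_vec p tau).
Local Notation lambda := (circ_eigenvalue p tau (fun l => (c l)%:C)).
Local Notation A := (Qmat R[i] p g *m circ p (fun l => (c l)%:C)).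
Hypotheses (p_pr : prime p) (p_gt2 : (2 < p)%N) (g_gen : is_generator_mod p g).
Hypotheses (b2_gt0 : 0 < b2) (lambda_Sigma' : forall k : 'I_p, lambda k = Sigma' p b1 b2 k).

Let tau_prim : p.-primitive_root tau := unit_root_prim R (ltn0Sn m.+1).
Let tau_p : tau ^+ p = 1 := prim_expr_order tau_prim.

Let b2C_neq0 : b2%:C != 0.
Proof. by rewrite real_complex_eq0 gt_eqF. Qed.

Lemma Qmat_circ_mul_fourier k : A *m v k = lambda k *: v (k * g).
Proof. by rewrite -mulmxA circ_mul_fourier // -scalemxAr Qmat_mul_fourier. Qed.

Lemma circ_eigenvalue0 : lambda 0 = b1%:C.
Proof. exact: (lambda_Sigma' ord0). Qed.

Lemma circ_eigenvalue_ndvd k : ~~ (p %| k)%N -> lambda k = b2%:C * tau ^+ k.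
Proof.
move=> p_ndvd_k; have k_lt := ltn_pmod k (ltn0Sn m.+1).
have -> : lambda k = lambda (k %% p).
  apply: eq_bigr => l _.
  by rewrite (expr_modn tau_p (_ : _ = (k %% p * l)%N %[mod p])) // modnMml.
by rewrite (lambda_Sigma' (Ordinal k_lt)) /Sigma' /= ifN // (expr_modn tau_p (modn_mod _ _)).
Qed.

(* The scalar accumulates the eigenvalues b2 tau^(g^i) met along the orbit of v_1. *)
Definition fourier_orbit_vec s := (b2%:C ^+ s * tau ^+ (\sum_(i < s) g ^ i)%N) *: v (g ^ s).

Lemma Qmat_circ_mul_fourier_orbit_vec s : A *m fourier_orbit_vec s = fourier_orbit_vec s.+1.
Proof.
rewrite -scalemxAr Qmat_circ_mul_fourier circ_eigenvalue_ndvd ?ndvd_expg // scalerA -expnSr.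
rewrite /fourier_orbit_vec big_ord_recr /= exprD exprSr; congr (_ *: _).
by rewrite mulrACA mulrC.
Qed.

Lemma fourier_orbit_vec_wrap : fourier_orbit_vec m.+1 = b2%:C ^+ m.+1 *: fourier_orbit_vec 0.
Proof.
rewrite /fourier_orbit_vec; have -> : tau ^+ (\sum_(i < m.+1) g ^ i)%N = 1.
  by apply/eqP; rewrite -(prim_order_dvd tau_prim) dvdn_sum_expg.
rewrite big_ord0 !expr0 !mulr1 scale1r; congr (_ *: _).
apply/colP => j; rewrite !mxE; apply: (expr_modn tau_p).
by rewrite -modnMmr (expg_pred_mod p_pr g_gen) modnMmr.
Qed.

Lemma orbit_basis_unitmx : orbit_basis (v 0) fourier_orbit_vec \in unitmx.
Proof.
pose e (t : 'I_p) := if t == 0 :> nat then 0%N else (g ^ t.-1)%N.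
pose s (t : 'I_p) := if t == 0 :> nat then 1
  else b2%:C ^+ t.-1 * tau ^+ (\sum_(i < t.-1) g ^ i)%N.
have -> : orbit_basis (v 0) fourier_orbit_vec = \matrix_(r, t) (s t * tau ^+ (r * e t)).
  by apply/matrixP => r t; rewrite !mxE /s /e; case: ifP; rewrite ?mul1r ?muln0.
apply: fourier_basis_unitmx tau_prim _ _ => [i j|t]; last first.
  by rewrite /s; case: ifP => _; rewrite ?oner_neq0 ?mulf_neq0 ?expf_neq0 ?b2C_neq0
    ?(prim_root_eq0 tau_prim).
have ndvd := ndvd_expg p_pr g_gen.
have ltn_pred (t : 'I_p) : (t.-1 < p.-1)%N by have := ltn_ord t; lia.
rewrite /e => ij; apply: ord_inj; move: ij.
case: eqP => [-> | /eqP i_neq0]; case: eqP => [-> // | /eqP j_neq0].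
- by move=> h; have := ndvd j.-1; rewrite /dvdn -h mod0n.
- by move=> h; have := ndvd i.-1; rewrite /dvdn h mod0n.
move=> /(expg_mod_inj p_pr g_gen (ltn_pred i) (ltn_pred j)); lia.
Qed.

Lemma char_poly_Qmat_circ : char_poly A = ('X - b1%:C%:P) * ('X^(m.+1) - (b2%:C ^+ m.+1)%:P).
Proof.
apply: char_poly_orbit_basis orbit_basis_unitmx.
- by rewrite Qmat_circ_mul_fourier mul0n circ_eigenvalue0.
- exact: Qmat_circ_mul_fourier_orbit_vec.
- exact: fourier_orbit_vec_wrap.
Qed.

End GCirculantSpectrum.

Theorem mainTheorem9 (R : realType) (p g : nat) (b1 b2 : R) (c : nat -> R) :
  prime p -> (2 < p)%N -> is_generator_mod p g -> 0 < b2 ->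
  (forall k : 'I_p,
     \sum_(l < p) (c l)%:C * (unit_root R p) ^+ (k * l) = Sigma' p b1 b2 k) ->
  let A := Qmat R p g *m circ p c in
  g_circulant g A /\
  char_poly (map_mx (fun x : R => x%:C) A) =
    \prod_(k < p) ('X - (Sigma p b1 b2 k)%:P).
Proof.
move=> p_pr p_gt2; have [m p_eq] : exists m, p = m.+2 by exists p.-2; lia.
subst p => g_gen b2_gt0 lambda_Sigma' A; split; first exact: g_circulant_Qmat_circ.
rewrite map_mxM map_Qmat map_circ (char_poly_Qmat_circ p_pr p_gt2 g_gen b2_gt0 lambda_Sigma').
rewrite big_ord_recl; congr (_ * _).
by rewrite -(prod_XsubC_scaled_prim_root (unit_root_prim R (ltn0Sn m))) ?real_complex_eq0
  ?gt_eqF.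
Qed.
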